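(* Let $k$ be an odd positive integer and $m$ a positive integer. Then: (1) every integer of the form $p_1^{2^{m+1}k-1}$ with $p_1$ prime is $2^mk$-$T_0T^\ast$-perfect; (2) if $k>1$ and there exist integers $d_1,\dots,d_{m+2}>1$ with $d_1\cdots d_{m+2}=k$ (a multiplicative partition of $k$) such that $d_i\equiv 1\pmod{2^{m+1}}$ for all $i$, then every integer of the form $p_1^{(d_1-1)/2^{m+1}}\cdots p_{m+2}^{(d_{m+2}-1)/2^{m+1}}$ with distinct primes $p_1,\dots,p_{m+2}$ is $2^mk$-$T_0T^\ast$-perfect; (3) every $2^mk$-$T_0T^\ast$-perfect number $n>1$ is either of the form $p_1^{2^{m+1}k-1}$ with $p_1$ prime, or of the form $p_1^{(d_1-1)/2^{m+1}}\cdots p_{m+2}^{(d_{m+2}-1)/2^{m+1}}$ with distinct primes $p_i$ and integers $d_1,\dots,d_{m+2}>1$ as in (2).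
   Context: For a positive integer $m'$, $T(m')$ denotes the product of all positive divisors of $m'$, and $T^\ast(m')$ the product of all unitary divisors of $m'$ (divisors $d$ with $\gcd(d,m'/d)=1$). For an integer $K\ge 2$, an integer $n>1$ is called $K$-$T_0T^\ast$-perfect if $T(T^\ast(n))=n^K$. A multiplicative partition of an integer $N>1$ is an unordered factorization of $N$ as a product of integers in $\{1,\dots,N\}$. *)

From mathcomp Require Import all_boot.
Set Implicit Arguments. Unset Strict Implicit. Unset Printing Implicit Defensive.

Definition Tdiv (m : nat) : nat := \prod_(d <- divisors m) d.

Definition Tstar (m : nat) : nat :=
  \prod_(d <- divisors m | coprime d (m %/ d)) d.

Definition KT0Tstar_perfect (K n : nat) : Prop :=
  2 <= K /\ 1 < n /\ Tdiv (Tstar n) = n ^ K.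

(* Pairing each divisor d of N with N/d gives T(N)^2 = N^tau(N); unitary
   divisors are closed under this pairing and there are 2^w of them when n has
   w prime factors, so T*(n) = n^c with c = 2^(w-1).  Writing n = prod p_i^e_i
   this yields T(T*(n))^2 = n^(c * prod (c e_i + 1)), hence n is
   2^m k-T0T*-perfect iff c * prod (c e_i + 1) = 2^(m+1) k.  For w = 1 this
   says e_1 + 1 = 2^(m+1) k; for w >= 2 every factor c e_i + 1 is odd, so
   comparing powers of 2 gives w = m + 2 and prod (2^(m+1) e_i + 1) = k, i.e.
   d_i = 2^(m+1) e_i + 1. *)

From mathcomp Require Import all_boot.
Set Implicit Arguments. Unset Strict Implicit. Unset Printing Implicit Defensive.

Lemma prod_const_seq (T : Type) (s : seq T) n : \prod_(x <- s) n = n ^ size s.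
Proof. by rewrite big_const_seq count_predT iter_muln_1. Qed.

Lemma divn_divK n d : 0 < n -> d %| n -> n %/ (n %/ d) = d.
Proof. by move=> n_gt0 dvd_dn; rewrite divnA // mulKn. Qed.

Lemma prod_divisors_sqr n (Q : pred nat) : 0 < n ->
  (forall d, d %| n -> Q (n %/ d) = Q d) ->
  (\prod_(d <- divisors n | Q d) d) ^ 2 = n ^ count Q (divisors n).
Proof.
move=> n_gt0 Q_codiv; rewrite -big_filter -size_filter.
set s := filter Q (divisors n).
have mem_s d : (d \in s) = Q d && (d %| n) by rewrite mem_filter -dvdn_divisors.
have s_uniq : uniq s by rewrite filter_uniq // divisors_uniq.
have codiv_perm : perm_eq s [seq n %/ d | d <- s].
  apply: uniq_perm => // [|d].
    rewrite map_inj_in_uniq // => x y; rewrite !mem_s => /andP[_ xn] /andP[_ yn] exy.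
    by rewrite -(divn_divK n_gt0 xn) exy divn_divK.
  apply/idP/mapP => [|[x]]; rewrite !mem_s => /andP[Qd dn].
    by exists (n %/ d); rewrite ?divn_divK // mem_s Q_codiv // Qd dvdn_div.
  by move=> ->; rewrite Q_codiv // Qd dvdn_div.
rewrite expnS expn1 {2}(perm_big _ codiv_perm) big_map -big_split /=.
rewrite -prod_const_seq; apply: eq_big_seq => d; rewrite mem_s => /andP[_ dn].
by rewrite mulnC divnK.
Qed.

Definition unitary (n : nat) : pred nat := fun d => coprime d (n %/ d).

Lemma Tdiv_sqr n : 0 < n -> Tdiv n ^ 2 = n ^ size (divisors n).
Proof. by move=> n_gt0; rewrite -count_predT prod_divisors_sqr. Qed.

Lemma Tstar_sqr n : 0 < n -> Tstar n ^ 2 = n ^ count (unitary n) (divisors n).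
Proof.
move=> n_gt0; apply: prod_divisors_sqr => // d dn.
by rewrite /unitary divn_divK // coprime_sym.
Qed.

Lemma gcdn_coprimeM a b d : coprime a b -> d %| a * b -> gcdn d a * gcdn d b = d.
Proof.
move=> cop_ab dvd_dab; apply/eqP; rewrite eqn_dvd; apply/andP; split.
  rewrite Gauss_dvd ?dvdn_gcdl //.
  exact: coprime_dvdl (dvdn_gcdr _ _) (coprime_dvdr (dvdn_gcdr _ _) cop_ab).
rewrite muln_gcdl !muln_gcdr !dvdn_gcd dvd_dab.
by rewrite !(dvdn_mulr _ (dvdnn d)) (dvdn_mull _ (dvdnn d)).
Qed.

Section CoprimeDivisors.
Variables a b : nat.
Hypotheses (a_gt0 : 0 < a) (b_gt0 : 0 < b) (cop_ab : coprime a b).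

Lemma divisors_coprimeM :
  perm_eq (divisors (a * b)) [seq x * y | x <- divisors a, y <- divisors b].
Proof.
have ab_gt0 : 0 < a * b by rewrite muln_gt0 a_gt0.
have gcd_a x y : x %| a -> y %| b -> gcdn a (x * y) = x.
  move=> xa yb; rewrite mulnC Gauss_gcdr; first exact/gcdn_idPr.
  exact: coprime_dvdr yb cop_ab.
apply: uniq_perm; rewrite ?divisors_uniq //.
  apply: allpairs_uniq; rewrite ?divisors_uniq //.
  move=> [x1 y1] [x2 y2] /allpairsP[[u1 v1] /= [+ + [-> ->]]].
  move=> /= + + /allpairsP[[u2 v2] /= [+ + [-> ->]]] /=.
  rewrite -!dvdn_divisors // => u1a v1b u2a v2b e12.
  have eu : u1 = u2 by rewrite -(gcd_a u1 v1) // e12 gcd_a.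
  have u1_gt0 : 0 < u1 by apply: dvdn_gt0 u1a.
  by move: e12; rewrite eu => /eqP; rewrite eqn_pmul2l -?eu // => /eqP->.
move=> d; rewrite -dvdn_divisors //; apply/idP/allpairsP => [dab|].
  exists (gcdn d a, gcdn d b); rewrite /= -!dvdn_divisors //.
  by rewrite !dvdn_gcdr gcdn_coprimeM.
by case=> [[x y] /= []]; rewrite -!dvdn_divisors // => xa yb ->; apply: dvdn_mul.
Qed.

Lemma size_divisors_coprimeM :
  size (divisors (a * b)) = size (divisors a) * size (divisors b).
Proof. by rewrite (perm_size divisors_coprimeM) size_allpairs. Qed.

Lemma unitary_coprimeM x y : x %| a -> y %| b ->
  unitary (a * b) (x * y) = unitary a x && unitary b y.
Proof.
move=> xa yb; have x_gt0 := dvdn_gt0 a_gt0 xa; have y_gt0 := dvdn_gt0 b_gt0 yb.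
rewrite /unitary -{1}(divnK xa) -{1}(divnK yb) mulnACA mulnK ?muln_gt0 ?x_gt0 //.
rewrite coprimeMl !coprimeMr.
have -> : coprime x (b %/ y).
  exact: coprime_dvdl xa (coprime_dvdr (dvdn_div yb) cop_ab).
have -> : coprime y (a %/ x).
  by rewrite coprime_sym; apply: coprime_dvdl (dvdn_div xa) (coprime_dvdr yb cop_ab).
by rewrite andbT.
Qed.

Lemma count_unitary_coprimeM :
  count (unitary (a * b)) (divisors (a * b))
  = count (unitary a) (divisors a) * count (unitary b) (divisors b).
Proof.
rewrite (permP divisors_coprimeM) -!sum1_count big_mkcond big_allpairs_dep /=.
rewrite big_distrl [RHS]big_mkcond /=; apply: eq_big_seq => x.
rewrite -dvdn_divisors // => xa; case: ifP => [ux | nux].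
  rewrite mul1n [RHS]big_mkcond; apply: eq_big_seq => y.
  by rewrite -dvdn_divisors // => yb; rewrite unitary_coprimeM // ux.
apply: big1_seq => y; rewrite -dvdn_divisors // => yb.
by rewrite unitary_coprimeM // nux.
Qed.

End CoprimeDivisors.

Section PrimePower.
Variables p e : nat.
Hypothesis p_pr : prime p.

Lemma divisors_pfactor : perm_eq (divisors (p ^ e)) [seq p ^ i | i <- iota 0 e.+1].
Proof.
have pe_gt0 : 0 < p ^ e by rewrite expn_gt0 prime_gt0.
have expI := expnI (prime_gt1 p_pr).
apply: uniq_perm; rewrite ?divisors_uniq ?(map_inj_uniq expI) ?iota_uniq //.
move=> d; rewrite -dvdn_divisors //; apply/(dvdn_pfactor d e p_pr)/mapP.
  by case=> i le_ie ->; exists i; rewrite // mem_iota ltnS.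
by case=> i; rewrite mem_iota ltnS => le_ie ->; exists i.
Qed.

Lemma size_divisors_pfactor : size (divisors (p ^ e)) = e.+1.
Proof. by rewrite (perm_size divisors_pfactor) size_map size_iota. Qed.

Lemma unitary_pfactor i : i <= e -> unitary (p ^ e) (p ^ i) = (i == 0) || (i == e).
Proof.
move=> le_ie; rewrite /unitary -expnB ?prime_gt0 //.
case: i le_ie => [|i] le_ie; first by rewrite coprime1n.
rewrite coprime_pexpl //; case: (ltngtP i.+1 e) le_ie => // [lt_ie _ | -> _].
  by rewrite coprime_pexpr ?subn_gt0 // prime_coprime // dvdnn.
by rewrite subnn coprimen1 orbT.
Qed.

Lemma count_unitary_pfactor : 0 < e -> count (unitary (p ^ e)) (divisors (p ^ e)) = 2.
Proof.
move=> e_gt0; rewrite (permP divisors_pfactor) count_map.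
rewrite (@eq_in_count _ _ [pred i | (i == 0) || (i == e)]); last first.
  by move=> i; rewrite mem_iota ltnS => /= le_ie; rewrite unitary_pfactor.
rewrite -add1n iotaD /= add0n (@eq_in_count _ _ (pred1 e)); last first.
  by move=> i; rewrite mem_iota => /andP[i_gt0 _] /=; rewrite (gtn_eqF i_gt0).
by rewrite count_uniq_mem ?iota_uniq // mem_iota e_gt0 add1n ltnSn.
Qed.

End PrimePower.

Section ProductOfPrimePowers.
Variables (I : eqType) (r : seq I) (p : I -> nat).
Hypotheses (p_uniq : uniq (map p r)) (p_prime : {in r, forall i, prime (p i)}).

Lemma multiplicative_prod_pfactor (f : nat -> nat) (e : I -> nat) :
    f 1 = 1 ->
    (forall a b, 0 < a -> 0 < b -> coprime a b -> f (a * b) = f a * f b) ->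
  f (\prod_(i <- r) p i ^ e i) = \prod_(i <- r) f (p i ^ e i).
Proof.
move=> f1 fM; elim: r p_uniq p_prime => [|i s IHs]; first by rewrite !big_nil.
rewrite /= => /andP[pi_notin s_uniq] s_prime.
have pi_pr : prime (p i) by apply: s_prime; rewrite mem_head.
have {}s_prime : {in s, forall j, prime (p j)}.
  by move=> j js; apply: s_prime; rewrite inE js orbT.
have cop_rest : coprime (p i) (\prod_(j <- s) p j ^ e j).
  rewrite big_seq; elim/big_ind: _ => [|x y|j js]; first exact: coprimen1.
    by rewrite coprimeMr => -> ->.
  apply: coprimeXr; rewrite prime_coprime // (dvdn_prime2 pi_pr (s_prime j js)).
  by apply: contraNneq pi_notin => ->; apply: map_f js.
have rest_gt0 : 0 < \prod_(j <- s) p j ^ e j.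
  rewrite big_seq; apply: prodn_cond_gt0 => j js.
  by rewrite expn_gt0 prime_gt0 ?s_prime.
by rewrite !big_cons fM ?IHs ?coprimeXl // expn_gt0 prime_gt0.
Qed.

Lemma size_divisors_prod (e : I -> nat) :
  size (divisors (\prod_(i <- r) p i ^ e i)) = \prod_(i <- r) (e i).+1.
Proof.
rewrite (@multiplicative_prod_pfactor (fun m => size (divisors m))) //.
  by apply: eq_big_seq => i ir; rewrite size_divisors_pfactor ?p_prime.
exact: size_divisors_coprimeM.
Qed.

Lemma count_unitary_prod (e : I -> nat) : {in r, forall i, 0 < e i} ->
  count (unitary (\prod_(i <- r) p i ^ e i)) (divisors (\prod_(i <- r) p i ^ e i))
  = 2 ^ size r.
Proof.
move=> e_gt0.
rewrite (@multiplicative_prod_pfactor (fun m => count (unitary m) (divisors m))) //.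
  rewrite -prod_const_seq; apply: eq_big_seq => i ir.
  by rewrite count_unitary_pfactor ?p_prime ?e_gt0.
exact: count_unitary_coprimeM.
Qed.

Variable e : I -> nat.
Hypotheses (e_gt0 : {in r, forall i, 0 < e i}) (r_gt0 : 0 < size r).
Let n := \prod_(i <- r) p i ^ e i.
Let c := 2 ^ (size r).-1.

Lemma prod_pfactor_gt1 : 1 < n.
Proof.
rewrite /n; case: r r_gt0 p_prime e_gt0 => // i s _ s_prime s_e_gt0.
have pi_gt1 : 1 < p i ^ e i.
  by rewrite -(exp1n (e i)) ltn_exp2r ?prime_gt1 ?s_e_gt0 ?s_prime ?mem_head.
rewrite big_cons (leq_trans pi_gt1) // leq_pmulr // big_seq.
by apply: prodn_cond_gt0 => j js; rewrite expn_gt0 prime_gt0 ?s_prime // inE js orbT.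
Qed.

Lemma Tstar_prod : Tstar n = n ^ c.
Proof.
have n_gt0 : 0 < n by apply: ltnW prod_pfactor_gt1.
apply/eqP; rewrite -(@eqn_exp2r _ _ 2) // Tstar_sqr // count_unitary_prod //.
by rewrite -expnM -expnSr prednK.
Qed.

Lemma Tdiv_Tstar_sqr_prod : Tdiv (Tstar n) ^ 2 = n ^ (c * \prod_(i <- r) (c * e i).+1).
Proof.
have n_gt0 : 0 < n by apply: ltnW prod_pfactor_gt1.
have ncE : n ^ c = \prod_(i <- r) p i ^ (c * e i).
  rewrite /n (big_morph (expn^~ c) (fun a b => expnMn a b c) (exp1n c)).
  by apply: eq_bigr => i _; rewrite -expnM mulnC.
by rewrite Tstar_prod Tdiv_sqr ?expn_gt0 ?n_gt0 // {2}ncE size_divisors_prod expnM.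
Qed.

Lemma T0Tstar_perfect_prodE K :
  KT0Tstar_perfect K n <-> 2 <= K /\ c * \prod_(i <- r) (c * e i).+1 = K * 2.
Proof.
have n_gt1 := prod_pfactor_gt1.
rewrite /KT0Tstar_perfect; split=> [[K_ge2 [_ TT_nK]] | [K_ge2 E_2K]]; split=> //.
  by apply/eqP; rewrite -(eqn_exp2l _ _ n_gt1) -Tdiv_Tstar_sqr_prod TT_nK expnM.
split=> //; apply/eqP; rewrite -(@eqn_exp2r _ _ 2) //.
by rewrite Tdiv_Tstar_sqr_prod E_2K expnM.
Qed.

End ProductOfPrimePowers.

Lemma size_index_enum (T : finType) : size (index_enum T) = #|T|.
Proof. by rewrite cardT enumT. Qed.

Lemma prod_primes_logn n : 0 < n -> n = \prod_(q <- primes n) q ^ logn q n.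
Proof. by move=> n_gt0; rewrite {1}(prod_prime_decomp n_gt0) prime_decompE big_map. Qed.

Lemma pow2_odd_inj a b x y : odd x -> odd y -> 2 ^ a * x = 2 ^ b * y -> a = b /\ x = y.
Proof.
have logn2 c z : odd z -> logn 2 (2 ^ c * z) = c.
  move=> odd_z; rewrite lognM ?expn_gt0 ?(odd_gt0 odd_z) // pfactorK //.
  by rewrite logn_coprime ?addn0 // coprime2n.
move=> odd_x odd_y Exy; have eab : a = b by rewrite -(logn2 a x) // Exy logn2.
by split=> //; apply/eqP; rewrite -(eqn_pmul2l (expn_gt0 2 a)) Exy eab.
Qed.

Lemma pow2_oddM_ge2 k m : odd k -> 0 < m -> 2 <= 2 ^ m * k.
Proof.
move=> odd_k m_gt0; rewrite (leq_trans _ (leq_pmulr _ (odd_gt0 odd_k))) //.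
by rewrite -{1}(expn1 2) leq_exp2l.
Qed.

Lemma T0Tstar_perfect_pfactor k m p1 : odd k -> 0 < m -> prime p1 ->
  KT0Tstar_perfect (2 ^ m * k) (p1 ^ (2 ^ m.+1 * k - 1)).
Proof.
move=> odd_k m_gt0 p1_pr; set a := _ - 1.
have aS : a.+1 = 2 ^ m.+1 * k.
  by rewrite /a subn1 prednK // muln_gt0 expn_gt0 (odd_gt0 odd_k).
have a_gt0 : 0 < a by rewrite -ltnS aS pow2_oddM_ge2.
rewrite -[p1 ^ a](big_seq1 muln p1 (fun q => q ^ a)).
apply/T0Tstar_perfect_prodE => //=; first by move=> q; rewrite inE => /eqP->.
by rewrite pow2_oddM_ge2 // big_seq1 !mul1n aS expnS -mulnA mulnC.
Qed.

Lemma T0Tstar_perfect_prod_ord k m (d p : 'I_m.+2 -> nat) : odd k -> 0 < m ->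
    (forall i, 1 < d i) -> \prod_(i < m.+2) d i = k ->
    (forall i, d i = 1 %[mod 2 ^ m.+1]) ->
    (forall i, prime (p i)) -> injective p ->
  KT0Tstar_perfect (2 ^ m * k) (\prod_(i < m.+2) p i ^ ((d i - 1) %/ 2 ^ m.+1)).
Proof.
move=> odd_k m_gt0 d_gt1 prod_d d_mod p_pr p_inj.
have dE i : (2 ^ m.+1 * ((d i - 1) %/ 2 ^ m.+1)).+1 = d i.
  have : 2 ^ m.+1 %| d i - 1 by rewrite -eqn_mod_dvd ?(ltnW (d_gt1 i)) // d_mod.
  by move=> /divnK; rewrite mulnC => ->; rewrite subn1 prednK // ltnW.
apply/T0Tstar_perfect_prodE.
- by rewrite map_inj_uniq ?index_enum_uniq.
- by move=> i _.
- move=> i _; rewrite lt0n; apply: contraTneq (d_gt1 i) => e_eq0.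
  by rewrite -dE e_eq0 muln0.
- by rewrite size_index_enum card_ord.
rewrite pow2_oddM_ge2 // size_index_enum card_ord /=; split=> //.
by rewrite (eq_bigr _ (fun i _ => dE i)) prod_d expnS -mulnA mulnC.
Qed.

Lemma T0Tstar_perfect_primesE K n : 1 < n ->
  let c := 2 ^ (size (primes n)).-1 in
  KT0Tstar_perfect K n <-> 2 <= K /\ c * \prod_(q <- primes n) (c * logn q n).+1 = K * 2.
Proof.
move=> n_gt1 c; have n_gt0 := ltnW n_gt1.
have uniq_primes : uniq (map id (primes n)) by rewrite map_id primes_uniq.
have primes_pr : {in primes n, forall q, prime q}.
  by move=> q; rewrite mem_primes => /andP[].
have logn_pos : {in primes n, forall q, 0 < logn q n} by move=> q; rewrite logn_gt0.
have s_gt0 : 0 < size (primes n) by rewrite lt0n size_eq0 primes_eq0 -leqNgt.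
have := T0Tstar_perfect_prodE uniq_primes primes_pr logn_pos s_gt0 K.
by rewrite -prod_primes_logn.
Qed.

Section Classification.
Variables k m n : nat.
Hypotheses (odd_k : odd k) (n_gt1 : 1 < n).
Let c := 2 ^ (size (primes n)).-1.
Hypothesis exponentE : c * \prod_(q <- primes n) (c * logn q n).+1 = 2 ^ m.+1 * k.

Lemma classification_one_prime : size (primes n) = 1 ->
  exists p1, prime p1 /\ n = p1 ^ (2 ^ m.+1 * k - 1).
Proof.
move=> s_eq1; have [q pnE] : exists q, primes n = [:: q].
  by move: s_eq1; case: (primes n) => [|q []] // _; exists q.
exists q; split; first by have := mem_head q [::]; rewrite -pnE mem_primes => /andP[].
move: exponentE; rewrite /c pnE big_seq1 /= !mul1n => <-.
by rewrite subn1 /= {1}(prod_primes_logn (ltnW n_gt1)) pnE big_seq1.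
Qed.

Lemma classification_many_primes : 1 < size (primes n) ->
  exists (d p : 'I_m.+2 -> nat),
     (forall i, 1 < d i) /\ \prod_(i < m.+2) d i = k /\
     (forall i, d i = 1 %[mod 2 ^ m.+1]) /\
     (forall i, prime (p i)) /\ injective p /\
     n = \prod_(i < m.+2) p i ^ ((d i - 1) %/ 2 ^ m.+1).
Proof.
move=> s_gt1.
have odd_prod : odd (\prod_(q <- primes n) (c * logn q n).+1).
  elim/big_ind: _ => // [x y odd_x odd_y | q _]; first by rewrite oddM odd_x.
  by rewrite /= oddM oddX -subn1 subn_eq0 leqNgt s_gt1.
have [s1E prod_k] := pow2_odd_inj odd_prod odd_k exponentE.
have s_eq : size (primes n) = m.+2 by rewrite -s1E prednK // ltnW.
pose p (i : 'I_m.+2) := nth 0 (primes n) i.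
have p_in i : p i \in primes n by rewrite mem_nth // s_eq.
exists (fun i => (2 ^ m.+1 * logn (p i) n).+1), p.
have logn_pE i : ((2 ^ m.+1 * logn (p i) n).+1 - 1) %/ 2 ^ m.+1 = logn (p i) n.
  by rewrite subn1 mulKn // expn_gt0.
rewrite /c s1E in prod_k.
split; [|split; [|split; [|split; [|split]]]].
- by move=> i; rewrite ltnS muln_gt0 expn_gt0 logn_gt0 p_in.
- by rewrite -prod_k (big_nth 0) s_eq big_mkord.
- by move=> i; rewrite -addn1 mulnC modnMDl.
- by move=> i; have := p_in i; rewrite mem_primes => /andP[].
- by move=> i j /eqP; rewrite nth_uniq ?s_eq ?primes_uniq // => /eqP/val_inj.
rewrite (eq_bigr _ (fun i _ => congr1 (expn (p i)) (logn_pE i))).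
by rewrite {1}(prod_primes_logn (ltnW n_gt1)) (big_nth 0) s_eq big_mkord.
Qed.

End Classification.

Theorem mainTheorem12 (k m : nat) (hk : odd k) (hm : 0 < m) :
  (* (1) *)
  (forall p1 : nat, prime p1 ->
     KT0Tstar_perfect (2 ^ m * k) (p1 ^ (2 ^ m.+1 * k - 1)))
  /\
  (* (2) *)
  (1 < k ->
   forall d : 'I_(m.+2) -> nat,
     (forall i, 1 < d i) ->
     \prod_(i < m.+2) d i = k ->
     (forall i, d i = 1 %[mod 2 ^ m.+1]) ->
     forall p : 'I_(m.+2) -> nat,
       (forall i, prime (p i)) -> injective p ->
       KT0Tstar_perfect (2 ^ m * k)
         (\prod_(i < m.+2) p i ^ ((d i - 1) %/ 2 ^ m.+1)))
  /\
  (* (3) *)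
  (forall n : nat, 1 < n -> KT0Tstar_perfect (2 ^ m * k) n ->
     (exists p1 : nat, prime p1 /\ n = p1 ^ (2 ^ m.+1 * k - 1))
     \/
     (exists (d : 'I_(m.+2) -> nat) (p : 'I_(m.+2) -> nat),
        (forall i, 1 < d i) /\
        \prod_(i < m.+2) d i = k /\
        (forall i, d i = 1 %[mod 2 ^ m.+1]) /\
        (forall i, prime (p i)) /\ injective p /\
        n = \prod_(i < m.+2) p i ^ ((d i - 1) %/ 2 ^ m.+1))).
Proof.
split; first by move=> p1; apply: T0Tstar_perfect_pfactor.
split; first by move=> _ d d_gt1 prod_d d_mod p; apply: T0Tstar_perfect_prod_ord.
move=> n n_gt1 /(T0Tstar_perfect_primesE _ n_gt1) [_].
rewrite mulnAC -expnSr => exponentE.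
have s_gt0 : 0 < size (primes n) by rewrite lt0n size_eq0 primes_eq0 -leqNgt.
case: (ltngtP (size (primes n)) 1) => [|s_gt1|s_eq1]; first by rewrite ltnNge s_gt0.
  by right; apply: classification_many_primes.
by left; apply: classification_one_prime.
Qed.
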